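(* For any word $w=z_{k_1}\cdots z_{k_n}$ of length $n\geq 1$ and weight $k=k_1+\cdots+k_n$, \[\frac{d}{dt}S^t(C(w))=\begin{cases}0&(n=1),\\ S^t(C(\delta(w)))&(n\geq 2),\end{cases}\qquad \frac{d}{dt}S^t(\Sigma(w))=\begin{cases}(k-1)z_{k+1}&(n=1),\\ S^t(\Sigma(\delta(w)))-S^t(C(w))&(n\geq 2).\end{cases}\]
   Context: Multiple zeta setting: $\mathfrak{h}^1$ is the non-commutative polynomial algebra over $\mathbb{Q}$ in letters $z_k$ ($k\geq1$), with $z_k\circ z_l=z_{k+l}$ on the span of letters, acting on words by $a\circ 1=0$, $a\circ(bw)=(a\circ b)w$. For an indeterminate $t$, the $\mathbb{Q}[t]$-linear operator $S^t$ on $\mathfrak{h}^1[t]$ is defined by $S^t(1)=1$, $S^t(aw)=aS^t(w)+t\,a\circ S^t(w)$. For a word $w=z_{k_1}\cdots z_{k_n}$ with $n\geq1$, define $C(w)=\sum_{l=1}^n z_{k_l+1}z_{k_{l+1}}\cdots z_{k_n}z_{k_1}\cdots z_{k_{l-1}}$, $\Sigma(w)=\sum_{l=1}^n\sum_{j=1}^{k_l-1}z_{k_l+1-j}z_{k_{l+1}}\cdots z_{k_n}z_{k_1}\cdots z_{k_{l-1}}z_j$, and, if $n\geq 2$ (with $k_{n+1}:=k_1$), $\delta(w)=\sum_{l=1}^n z_{k_l+k_{l+1}}z_{k_{l+2}}\cdots z_{k_n}z_{k_1}\cdots z_{k_{l-1}}$ (for $l=n$ this is $z_{k_n+k_1}z_{k_2}\cdots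 z_{k_{n-1}}$). These are extended $\mathbb{Q}[t]$-linearly. *)

From HB Require Import structures.
From mathcomp Require Import all_boot all_order all_algebra.
Set Implicit Arguments. Unset Strict Implicit. Unset Printing Implicit Defensive.
Import GRing.Theory.
Local Open Scope ring_scope.

(* A word z_{k_1}...z_{k_n} is the sequence [:: k_1; ...; k_n] (letters have
   indices k >= 1; the empty sequence is the empty word 1).
   An element of h^1[t] is represented as a formal Q[t]-linear combination,
   i.e. a finite list of (coefficient, word) pairs; two representations denote
   the same element iff every word has the same total coefficient. *)
Definition word := seq nat.
Definition elt := seq ({poly rat} * word).

Definition coefw (x : elt) (u : word) : {poly rat} :=
  \sum_(p <- x | p.2 == u) p.1.

Definition eqv (x y : elt) : Prop := forall u : word, coefw x u = coefw y u.

Definition scale (c : {poly rat}) (x : elt) : elt := [seq (c * p.1, p.2) | p <- x].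

Definition linext (f : word -> elt) (x : elt) : elt :=
  flatten [seq scale p.1 (f p.2) | p <- x].

Definition circ (a : nat) (x : elt) : elt :=
  flatten [seq (match p.2 with
                | [::] => [::]
                | b :: u => [:: (p.1, (a + b)%N :: u)]
                end) | p <- x].

Fixpoint Stw (w : word) : elt :=
  match w with
  | [::] => [:: (1, [::])]
  | a :: w' =>
      [seq (p.1, a :: p.2) | p <- Stw w'] ++ scale 'X (circ a (Stw w'))
  end.

Definition St (x : elt) : elt := linext Stw x.

Definition ddt (x : elt) : elt := [seq (p.1^`(), p.2) | p <- x].

(* C(w) : sum over l of z_{k_l+1} z_{k_{l+1}}...z_{k_n} z_{k_1}...z_{k_{l-1}};
   rot i w = k_{i+1} ... k_n k_1 ... k_i. *)
Definition Cw (w : word) : elt :=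
  [seq (1, (head 0%N (rot i w)).+1 :: behead (rot i w)) | i <- iota 0 (size w)].

Definition Sigmaw (w : word) : elt :=
  flatten [seq [seq (1, ((head 0%N (rot i w)).+1 - j)%N :: rcons (behead (rot i w)) j)
               | j <- iota 1 (head 0%N (rot i w)).-1]
          | i <- iota 0 (size w)].

(* delta(w), for n >= 2 (k_{n+1} := k_1) *)
Definition deltaw (w : word) : elt :=
  [seq (1, (nth 0%N (rot i w) 0 + nth 0%N (rot i w) 1)%N :: drop 2 (rot i w))
  | i <- iota 0 (size w)].

Definition C (x : elt) : elt := linext Cw x.
Definition Sigma (x : elt) : elt := linext Sigmaw x.
Definition wordelt (w : word) : elt := [:: (1, w)].

(* Elements are compared through their pairings with test functions
   G : word -> Q[t] (eqv_of_pairing), which turns S^t, C, Sigma and d/dt into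
   linear functionals that can be computed by recursion on words.

   Differentiating S^t(a w) = a S^t(w) + t a o S^t(w)
      gives  d/dt S^t(v) = sum_p S^t(merge_at p v),  where merge_at p joins
      the letters at positions p and p+1 (dSpair_merges).
   2. Cyclic bookkeeping.  With the letters of w of length N+1 written as an
      (N+1)-periodic function f, every word occurring in the statement is
      mkseq of an explicit letter function.  The contractions of the terms of
      C(w) are matched one to one with the terms of C(delta(w))
      (merged_Cwords_cyclic); the contractions of the terms of Sigma(w),
      together with the terms of C(w), are matched with the terms of
      Sigma(delta(w)) (merged_Swords_cyclic).  The matching is the bijection
      (i, p) |-> (i + p mod N+1, N - p) of sum_cyclic_reindex, plus an
      explicit treatment of the two ends.
   3. The theorem: one-letter words by direct computation, longer words by
      combining 1 and 2. *)

From mathcomp Require Import all_boot all_order all_algebra.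
From mathcomp Require Import zify ring.
Import GRing.Theory.
Local Open Scope ring_scope.

(* Two elements
   are equivalent as soon as they pair equally with every test function (take
   G the indicator of a word), so every identity below is proved as an
   identity of pairings. *)
Definition pairing (x : elt) (G : word -> {poly rat}) : {poly rat} :=
  \sum_(p <- x) p.1 * G p.2.

Lemma eqv_of_pairing (x y : elt) :
  (forall G, pairing x G = pairing y G) -> eqv x y.
Proof.
move=> xy u; have := xy (fun v => (v == u)%:R).
have coefE (z : elt) : coefw z u = pairing z (fun v => (v == u)%:R).
  rewrite /coefw /pairing big_mkcond; apply: eq_bigr => p _.
  by case: eqP; rewrite ?mulr1 ?mulr0.
by rewrite !coefE.
Qed.

Lemma pairing_nil G : pairing [::] G = 0.
Proof. by rewrite /pairing big_nil. Qed.

Lemma pairing_cat x y G : pairing (x ++ y) G = pairing x G + pairing y G.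
Proof. by rewrite /pairing big_cat. Qed.

Lemma pairing_ext x G G' : G =1 G' -> pairing x G = pairing x G'.
Proof. by move=> eG; apply: eq_bigr => p _; rewrite eG. Qed.

Lemma pairing_scale c x G : pairing (scale c x) G = c * pairing x G.
Proof.
by rewrite /pairing big_map mulr_sumr; apply: eq_bigr => p _; rewrite mulrA.
Qed.

Lemma pairing_linext f x G :
  pairing (linext f x) G = \sum_(p <- x) p.1 * pairing (f p.2) G.
Proof.
elim: x => [|p x IH]; first by rewrite /linext /= pairing_nil big_nil.
by rewrite /linext /= pairing_cat pairing_scale big_cons -IH.
Qed.

Lemma pairing_prefix a x G :
  pairing [seq (p.1, a :: p.2) | p <- x] G = pairing x (fun v => G (a :: v)).
Proof. by rewrite /pairing big_map. Qed.

Definition circ_test (a : nat) (G : word -> {poly rat}) (v : word) : {poly rat} :=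
  if v is b :: u then G ((a + b)%N :: u) else 0.

Lemma pairing_circ a x G : pairing (circ a x) G = pairing x (circ_test a G).
Proof.
elim: x => [|[c v] x IH]; first by rewrite /circ /= !pairing_nil.
rewrite /circ /= pairing_cat -/(circ a x) IH /pairing big_cons /=.
case: v => [|b u] /=; first by rewrite big_nil mulr0 !add0r.
by rewrite big_cons big_nil addr0.
Qed.

Lemma ddt_cat x y : ddt (x ++ y) = ddt x ++ ddt y.
Proof. exact: map_cat. Qed.

Lemma ddt_prefix a x :
  ddt [seq (p.1, a :: p.2) | p <- x] = [seq (p.1, a :: p.2) | p <- ddt x].
Proof. by rewrite /ddt -!map_comp. Qed.

Lemma ddt_circ a x : ddt (circ a x) = circ a (ddt x).
Proof.
elim: x => [|[c v] x IH] //.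
by rewrite /circ /= ddt_cat -/(circ a x) -/(circ a (ddt x)) IH; case: v.
Qed.

Lemma pairing_ddt_scale c x G :
  pairing (ddt (scale c x)) G = c^`() * pairing x G + c * pairing (ddt x) G.
Proof.
rewrite /pairing /ddt /scale -map_comp !big_map !mulr_sumr -big_split /=.
by apply: eq_bigr => p _; rewrite derivM mulrDl !mulrA.
Qed.

Lemma pairing_ddt_linext f x G :
  pairing (ddt (linext f x)) G =
  \sum_(p <- x) (p.1^`() * pairing (f p.2) G + p.1 * pairing (ddt (f p.2)) G).
Proof.
elim: x => [|p x IH]; first by rewrite /linext /= pairing_nil big_nil.
by rewrite /linext /= ddt_cat pairing_cat pairing_ddt_scale big_cons -IH.
Qed.

Definition Spair (v : word) (G : word -> {poly rat}) := pairing (Stw v) G.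
Definition dSpair (v : word) (G : word -> {poly rat}) := pairing (ddt (Stw v)) G.

Lemma Spair_ext v G G' : G =1 G' -> Spair v G = Spair v G'.
Proof. exact: pairing_ext. Qed.

Lemma pairing_St x G : pairing (St x) G = pairing x (fun v => Spair v G).
Proof. exact: pairing_linext. Qed.

Lemma Spair_nil G : Spair [::] G = G [::].
Proof. by rewrite /Spair /pairing big_seq1 mul1r. Qed.

Lemma dSpair_nil G : dSpair [::] G = 0.
Proof. by rewrite /dSpair /pairing big_seq1 derivC mul0r. Qed.

Lemma Spair_cons a v G :
  Spair (a :: v) G = Spair v (fun u => G (a :: u)) + 'X * Spair v (circ_test a G).
Proof. by rewrite /Spair /= pairing_cat pairing_prefix pairing_scale pairing_circ. Qed.

Lemma dSpair_cons a v G : dSpair (a :: v) G =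
  dSpair v (fun u => G (a :: u)) + Spair v (circ_test a G) +
  'X * dSpair v (circ_test a G).
Proof.
rewrite /dSpair /Spair /= ddt_cat ddt_prefix pairing_cat pairing_prefix.
by rewrite pairing_ddt_scale derivX mul1r ddt_circ !pairing_circ addrA.
Qed.

Definition merge_at (p : nat) (v : word) : word :=
  take p v ++ (nth 0%N v p + nth 0%N v p.+1)%N :: drop p.+2 v.

Definition merges (v : word) : seq word :=
  [seq merge_at p v | p <- iota 0 (size v).-1].

Lemma merges_cons a b v :
  merges [:: a, b & v] = ((a + b)%N :: v) :: [seq a :: u | u <- merges (b :: v)].
Proof.
rewrite /merges /= -map_comp -[1%N]/(1 + 0)%N iotaDl -map_comp.
by congr (_ :: _); rewrite /merge_at /= drop0.
Qed.

Lemma dSpair_merges v G : dSpair v G = \sum_(u <- merges v) Spair u G.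
Proof.
elim: v G => [|a v IH] G; first by rewrite dSpair_nil /merges big_nil.
rewrite dSpair_cons !IH.
case: v IH => [|b v] IH.
  by rewrite /merges /= !big_nil Spair_nil /= mulr0 !addr0.
rewrite merges_cons (big_cons 0 +%R) (big_map (cons a)).
have -> : \sum_(u <- merges (b :: v)) Spair (a :: u) G =
    \sum_(u <- merges (b :: v)) Spair u (fun u0 => G (a :: u0)) +
    'X * \sum_(u <- merges (b :: v)) Spair u (circ_test a G).
  by rewrite mulr_sumr -big_split; apply: eq_bigr => u _; rewrite Spair_cons.
rewrite [Spair (b :: v) _]Spair_cons [Spair (_ :: v) G]Spair_cons.
(* z_a o (z_b o u) = z_{a+b} o u *)
have -> : Spair v (circ_test b (circ_test a G)) = Spair v (circ_test (a + b) G).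
  by apply: Spair_ext => -[|c u] //=; rewrite addnA.
ring.
Qed.

(* The words C, Sigma and delta are built
   from rotations of w; writing them as  mkseq g n  turns every combinatorial
   identity between them into modular arithmetic on positions. *)
Section WordsAsFunctions.
Local Open Scope nat_scope.

Lemma nth_rot_mod (v : word) r t : r < size v -> t < size v ->
  nth 0 (rot r v) t = nth 0 v ((r + t) %% size v).
Proof.
move=> hr ht; rewrite /rot nth_cat size_drop.
case: ifP => h; first by rewrite nth_drop modn_small //; lia.
rewrite nth_take; last by lia.
have -> : r + t = (t - (size v - r)) + size v by lia.
by rewrite modnDr modn_small //; lia.
Qed.

Lemma head_rot_mod (v : word) r :
  r < size v -> head 0 (rot r v) = nth 0 v (r %% size v).
Proof. by move=> hr; rewrite -nth0 nth_rot_mod ?addn0 //; lia. Qed.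

Lemma mkseq_of_nth (s : word) h m :
  size s = m -> (forall t, t < m -> nth 0 s t = h t) -> s = mkseq h m.
Proof.
move=> hs hn; apply: (@eq_from_nth _ 0) => [|t]; rewrite ?size_mkseq // => lt.
by rewrite nth_mkseq -?hs // hn // -hs.
Qed.

Lemma eq_in_mkseq (g1 g2 : nat -> nat) m :
  (forall t, t < m -> g1 t = g2 t) -> mkseq g1 m = mkseq g2 m.
Proof.
by move=> eg; apply/eq_in_map => t; rewrite mem_iota => /andP[_ /eg].
Qed.

Definition Cterm r (v : word) : word := (head 0 (rot r v)).+1 :: behead (rot r v).
Definition Sterm r j (v : word) : word :=
  ((head 0 (rot r v)).+1 - j) :: rcons (behead (rot r v)) j.
Definition dterm r (v : word) : word :=
  (nth 0 (rot r v) 0 + nth 0 (rot r v) 1) :: drop 2 (rot r v).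

Lemma Cterm_mkseq v r : r < size v ->
  Cterm r v = mkseq (fun t => nth 0 v ((r + t) %% size v) + (t == 0)) (size v).
Proof.
move=> hr; apply: mkseq_of_nth => [|[|t] lt] /=.
- by rewrite size_behead size_rot; lia.
- by rewrite head_rot_mod // addn0 addn1.
- by rewrite nth_behead nth_rot_mod // addn0.
Qed.

Lemma Sterm_mkseq v r j : r < size v ->
  Sterm r j v = mkseq (fun t => if t == 0 then (nth 0 v (r %% size v)).+1 - j
     else if t == size v then j else nth 0 v ((r + t) %% size v)) (size v).+1.
Proof.
move=> hr; apply: mkseq_of_nth => [|[|t] lt] /=.
- by rewrite size_rcons size_behead size_rot; lia.
- by rewrite head_rot_mod.
- rewrite nth_rcons size_behead size_rot; case: ifP => ht.
    rewrite nth_behead nth_rot_mod //; last by lia.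
    by have -> : (t.+1 == size v) = false by lia.
  have -> : t == (size v).-1 by lia.
  by have -> : t.+1 == size v by lia.
Qed.

Lemma dterm_mkseq v r : 1 < size v -> r < size v ->
  dterm r v = mkseq (fun t => if t == 0
      then nth 0 v (r %% size v) + nth 0 v ((r + 1) %% size v)
      else nth 0 v ((r + t + 1) %% size v)) (size v).-1.
Proof.
move=> h1 hr; apply: mkseq_of_nth => [|[|t] lt] /=.
- by rewrite size_drop size_rot; lia.
- by rewrite !nth_rot_mod ?addn0 //; lia.
- rewrite nth_drop nth_rot_mod; last by lia.
  by have -> : r + (2 + t) = r + t.+1 + 1 by lia.
  done.
Qed.

Definition merge_fun (g : nat -> nat) p t :=
  if t < p then g t else if t == p then g p + g p.+1 else g t.+1.

Lemma merge_at_mkseq g m p :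
  p.+1 < m -> merge_at p (mkseq g m) = mkseq (merge_fun g p) m.-1.
Proof.
move=> hp; apply: mkseq_of_nth => [|t lt].
  rewrite /merge_at size_cat /= size_take size_drop size_mkseq.
  have -> : p < m by lia.
  lia.
rewrite /merge_at nth_cat size_take size_mkseq /merge_fun.
have -> : p < m by lia.
case: ifP => h1; first by rewrite nth_take // nth_mkseq //; lia.
case: ifP => h2.
  have -> : t - p = 0 by lia.
  by rewrite /= !nth_mkseq //; lia.
have -> : t - p = (t - p - 1).+1 by lia.
by rewrite /= nth_drop nth_mkseq; [congr g; lia | lia].
Qed.

Lemma merges_mkseq g m : 0 < m ->
  merges (mkseq g m) = [seq mkseq (merge_fun g p) m.-1 | p <- iota 0 m.-1].
Proof.
move=> hm; rewrite /merges size_mkseq.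
by apply/eq_in_map => p; rewrite mem_iota => /andP[_ lt]; apply: merge_at_mkseq; lia.
Qed.

End WordsAsFunctions.

Lemma sum_succ_mod (V : nmodType) (g : nat -> V) n :
  \sum_(0 <= i < n) g (i.+1 %% n)%N = \sum_(0 <= i < n) g i.
Proof.
case: n => [|n]; first by rewrite !big_geq.
rewrite big_nat_recr //= modnn big_nat_recl // addrC; congr (_ + _).
by apply: eq_big_nat => i /andP[_ lt]; rewrite modn_small.
Qed.

Lemma sum_shift_mod (V : nmodType) (h : nat -> V) n q :
  \sum_(0 <= i < n) h ((i + q) %% n)%N = \sum_(0 <= i < n) h i.
Proof.
elim: q h => [|q IH] h.
  by apply: eq_big_nat => i /andP[_ lt]; rewrite addn0 modn_small.
rewrite -(IH h) -(@sum_succ_mod _ (fun k => h ((k + q) %% n)%N)).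
by apply: eq_big_nat => i _ /=; rewrite modnDml addSn addnS.
Qed.

(* The map (i, p) |-> (i + p mod n, N - p) is a bijection of
   [0, n) x [1, N); it matches the interior contractions of the rotations of w
   with the rotations of the contractions delta. *)
Lemma sum_cyclic_reindex (V : nmodType) n N (A : nat -> nat -> V) :
  \sum_(0 <= i < n) \sum_(1 <= p < N) A ((i + p) %% n)%N (N - p)%N
  = \sum_(0 <= m < n) \sum_(1 <= r < N) A m r.
Proof.
rewrite exchange_big_nat [RHS]exchange_big_nat [RHS]big_nat_rev.
apply: eq_big_nat => p _; rewrite add1n subSS.
exact: (@sum_shift_mod _ (fun m => A m (N - p)%N)).
Qed.

Lemma iota_split (a b : nat) : (0 < a)%N -> (0 < b)%N ->
  iota 1 (a + b).-1 = iota 1 a.-1 ++ a :: [seq (a + j)%N | j <- iota 1 b.-1].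
Proof.
move=> ha hb; have -> : ((a + b).-1 = a.-1 + (b.-1).+1)%N by lia.
rewrite iotaD; congr (_ ++ _).
have -> : (1 + a.-1 = a)%N by lia.
by rewrite /= -iotaDl addn1.
Qed.

Lemma modn_sub (d x : nat) : (d <= x)%N -> (x < d + d)%N -> (x %% d = x - d)%N.
Proof.
move=> h1 h2; have -> : x = ((x - d) + d)%N by lia.
by rewrite modnDr modn_small; lia.
Qed.

(* The letters of a cyclic word of length N+1 >= 2 are f 0, ..., f N for an
   (N+1)-periodic f. *)
Section CyclicWords.
Variables (f : nat -> nat) (N : nat).
Hypothesis N_gt0 : (0 < N)%N.
Hypothesis f_periodic : forall x, f (x %% N.+1)%N = f x.

Section Letters.
Local Open Scope nat_scope.

Lemma f_period x y : x = y + N.+1 -> f x = f y.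
Proof. by move=> ->; rewrite -f_periodic modnDr f_periodic. Qed.

(* Letters of Cterm i w and of Sterm i j w. *)
Definition Cfun i t := f (i + t) + (t == 0).
Definition Sfun i j t := if t == 0 then (f i).+1 - j else if t == N.+1 then j else f (i + t).

(* Letters of dterm m w (of length N), of Cterm r (dterm m w) and of
   Sterm r j (dterm m w). *)
Definition dfun m s := if s == 0 then f m + f (m + 1) else f (m + s + 1).
Definition Cdfun m r t := dfun m ((r + t) %% N) + (t == 0).
Definition Sdfun m r j t :=
  if t == 0 then (dfun m r).+1 - j else if t == N then j else dfun m ((r + t) %% N).

Lemma dfun_mod x s : dfun (x %% N.+1) s = dfun x s.
Proof.
have fmodl y : f (x %% N.+1 + y) = f (x + y) by rewrite -f_periodic modnDml f_periodic.
by rewrite /dfun; case: eqP => _; rewrite ?f_periodic ?fmodl // -addnA fmodl addnA.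
Qed.

(* The letter at position N - p of the (i+p)-th contraction wraps around to
   the start of the i-th rotation; this drives the matching (i, p) |->
   (i + p, N - p). *)
Lemma dfun_reflect i p : 0 < p < N -> dfun (i + p) (N - p) = f i.
Proof.
move=> hp; rewrite /dfun; have -> : (N - p == 0) = false by lia.
by apply: f_period; lia.
Qed.

(* C: contracting the first two letters of the i-th term gives the first
   term of the i-th contraction; an interior contraction at p gives the term
   N - p of the (i+p)-th contraction. *)
Lemma merge_Cfun_first i t : t < N -> merge_fun (Cfun i) 0 t = Cdfun i 0 t.
Proof.
move=> ht; rewrite /merge_fun /Cfun /Cdfun /dfun add0n modn_small //.
case: t ht => [|t] ht /=; first by rewrite !addn0; lia.
by rewrite !addn0; congr f; lia.
Qed.

Lemma merge_Cfun_inner i p t : 0 < p < N -> t < N ->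
  merge_fun (Cfun i) p t = Cdfun (i + p) (N - p) t.
Proof.
move=> hp ht; rewrite /merge_fun /Cfun /Cdfun /dfun.
case: (ltngtP t p) => htp.
- rewrite modn_small; last by lia.
  have -> : (N - p + t == 0) = false by lia.
  by rewrite (f_period (i + p + (N - p + t) + 1) (i + t)) //; lia.
- rewrite modn_sub; try lia.
  have -> : (N - p + t - N == 0) = false by lia.
  have -> : (t == 0) = false by lia.
  have -> : i + p + (N - p + t - N) + 1 = i + t.+1 by lia.
  by rewrite addn0.
- subst t; have -> : N - p + p = 0 + N by lia.
  rewrite modnDr mod0n /=; have -> : (p == 0) = false by lia.
  by rewrite !addn0 addnS addn1.
Qed.

(* Sigma: the same matching for the Sigma-terms, with the two ends treated
   apart.  Contracting the last two letters of the term (i, j), or the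
   C-term i itself, gives a first Sigma-term of the (i+N)-th contraction,
   with splitting index f (i+N) + j, resp. f (i+N). *)
Lemma merge_Sfun_first i j t : j <= f i -> t < N.+1 ->
  merge_fun (Sfun i j) 0 t = Sdfun i 0 j t.
Proof.
move=> hj ht; rewrite /merge_fun /Sfun /Sdfun /dfun.
case: t ht => [|t] ht /=.
  have -> : (1 == N.+1) = false by lia.
  lia.
case: (eqVneq t.+1 N) => [-> | htN]; first by rewrite eqxx.
have -> : (t.+2 == N.+1) = false by lia.
rewrite add0n modn_small /=; last by lia.
by rewrite addnS addn1.
Qed.

Lemma merge_Sfun_last i j t : t < N.+1 ->
  merge_fun (Sfun i j) N t = Sdfun (i + N) 0 (f (i + N) + j) t.
Proof.
move=> ht; rewrite /merge_fun /Sfun /Sdfun /dfun.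
have fi : f (i + N + 1) = f i by apply: f_period; lia.
case: (ltngtP t N) => htN.
- case: t ht htN => [|t] ht htN /=; first by lia.
  have -> : (t.+1 == N.+1) = false by lia.
  rewrite modn_small; last by lia.
  by symmetry; apply: f_period; lia.
- lia.
- subst t; have -> : (N == 0) = false by lia.
  by rewrite eqxx /= (_ : (N == N.+1) = false) //; lia.
Qed.

Lemma Cfun_as_Sdfun i t : t < N.+1 -> Cfun i t = Sdfun (i + N) 0 (f (i + N)) t.
Proof.
move=> ht; rewrite /Cfun /Sdfun /dfun.
have fi : f (i + N + 1) = f i by apply: f_period; lia.
case: t ht => [|t] ht /=; first by rewrite addn0; lia.
case: (eqVneq t.+1 N) => [-> | htN]; first by rewrite addn0.
by rewrite modn_small /= ?addn0; [symmetry; apply: f_period | ]; lia.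
Qed.

Lemma merge_Sfun_inner i j p t : 0 < p < N -> t < N.+1 ->
  merge_fun (Sfun i j) p t = Sdfun (i + p) (N - p) j t.
Proof.
move=> hp ht; rewrite /Sdfun dfun_reflect // /merge_fun /Sfun /dfun.
case: (ltngtP t p) => htp.
- case: t ht htp => [|t] ht htp //=.
  have -> : (t.+1 == N.+1) = false by lia.
  have -> : (t.+1 == N) = false by lia.
  rewrite modn_small; last by lia.
  have -> : (N - p + t.+1 == 0) = false by lia.
  by symmetry; apply: f_period; lia.
- have -> : (t == 0) = false by lia.
  case: (eqVneq t N) => [-> | htN]; first by rewrite eqxx.
  have -> : (t.+1 == N.+1) = false by lia.
  rewrite modn_sub; try lia.
  have -> : (N - p + t - N == 0) = false by lia.
  have -> : i + p + (N - p + t - N) + 1 = i + t.+1 by lia.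
  done.
- subst t.
  have -> : (p == 0) = false by lia.
  have -> : (p == N.+1) = false by lia.
  have -> : (p == N) = false by lia.
  have -> : (p.+1 == N.+1) = false by lia.
  have -> : N - p + p = 0 + N by lia.
  by rewrite modnDr mod0n eqxx /= addn1 addnS.
Qed.

End Letters.

(* The words themselves: Cword i = C-term i, Sword i j = Sigma-term (i, j) of
   the cyclic word, and Cdword m r, Sdword m r j the C- and Sigma-terms of its
   m-th contraction delta. *)
Definition Cword i := mkseq (Cfun i) N.+1.
Definition Sword i j := mkseq (Sfun i j) N.+2.
Definition Cdword m r := mkseq (Cdfun m r) N.
Definition Sdword m r j := mkseq (Sdfun m r j) N.+1.

Lemma Cdword_mod (x r : nat) : Cdword (x %% N.+1) r = Cdword x r.
Proof. by apply: (eq_mkseq _ N) => t; rewrite /Cdfun dfun_mod. Qed.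

Lemma Sdword_mod (x r j : nat) : Sdword (x %% N.+1) r j = Sdword x r j.
Proof. by apply: (eq_mkseq _ N.+1) => t; rewrite /Sdfun !dfun_mod. Qed.

Variable V : nmodType.

(* Contractions of the C-terms are the C-terms of the contractions:
   the term (i, p = 0) is the term (i, r = 0), and an interior (i, p) is the
   term (i + p, N - p). *)
Lemma merged_Cwords_cyclic (H : word -> V) :
  \sum_(0 <= i < N.+1) \sum_(0 <= p < N) H (mkseq (merge_fun (Cfun i) p) N)
  = \sum_(0 <= m < N.+1) \sum_(0 <= r < N) H (Cdword m r).
Proof.
under eq_bigr => i _ do rewrite big_ltn //.
under [RHS]eq_bigr => m _ do rewrite big_ltn //.
rewrite !big_split /=; congr (_ + _).
  by apply: eq_bigr => i _; congr H; apply: eq_in_mkseq => t; apply: merge_Cfun_first.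
rewrite -(@sum_cyclic_reindex V N.+1 N (fun m r => H (Cdword m r))).
apply: eq_bigr => i _; apply: eq_big_nat => p hp.
by rewrite Cdword_mod; congr H; apply: eq_in_mkseq => t; apply: merge_Cfun_inner.
Qed.

Lemma merged_Swords_inner (H : word -> V) :
  \sum_(0 <= i < N.+1) \sum_(j <- iota 1 (f i).-1) \sum_(1 <= p < N)
      H (mkseq (merge_fun (Sfun i j) p) N.+1)
  = \sum_(0 <= m < N.+1) \sum_(1 <= r < N) \sum_(j <- iota 1 (dfun m r).-1)
      H (Sdword m r j).
Proof.
pose A m r := \sum_(j <- iota 1 (dfun m r).-1) H (Sdword m r j).
rewrite -(@sum_cyclic_reindex V N.+1 N A) {}/A.
apply: eq_bigr => i _; rewrite exchange_big; apply: eq_big_nat => p hp.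
rewrite dfun_mod dfun_reflect //; apply: eq_bigr => j _.
by rewrite Sdword_mod; congr H; apply: eq_in_mkseq => t; apply: merge_Sfun_inner.
Qed.

Hypothesis f_gt0 : forall x, (0 < f x)%N.

(* The contractions at the two ends of the Sigma-terms together with the
   C-terms exhaust the Sigma-terms of the contractions of the first two
   letters (r = 0): splitting  1 <= j < f m + f (m+1)  at  j = f m. *)
Lemma merged_Swords_boundary (H : word -> V) :
  \sum_(0 <= i < N.+1) \sum_(j <- iota 1 (f i).-1) H (mkseq (merge_fun (Sfun i j) 0) N.+1)
  + \sum_(0 <= i < N.+1) \sum_(j <- iota 1 (f i).-1) H (mkseq (merge_fun (Sfun i j) N) N.+1)
  + \sum_(0 <= i < N.+1) H (Cword i)
  = \sum_(0 <= m < N.+1) \sum_(j <- iota 1 (dfun m 0).-1) H (Sdword m 0 j).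
Proof.
under [RHS]eq_bigr => m _ do
  rewrite [dfun m 0]/dfun eqxx iota_split // big_cat big_cons big_map.
rewrite !big_split /= -addrA [X in _ + X]addrC; congr (_ + (_ + _)).
- apply: eq_bigr => i _; apply: eq_big_seq => j; rewrite mem_iota => hj.
  by congr H; apply: eq_in_mkseq => t; apply: merge_Sfun_first; lia.
- rewrite -[RHS](@sum_shift_mod V _ N.+1 N); apply: eq_bigr => i _.
  rewrite Sdword_mod f_periodic.
  by congr H; apply: eq_in_mkseq => t; apply: Cfun_as_Sdfun.
- rewrite -[RHS](@sum_shift_mod V _ N.+1 N); apply: eq_bigr => i _.
  have -> : f ((i + N) %% N.+1 + 1)%N = f i.
    by rewrite -f_periodic modnDml f_periodic; apply: f_period; lia.
  apply: eq_bigr => j _; rewrite Sdword_mod f_periodic.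
  by congr H; apply: eq_in_mkseq => t; apply: merge_Sfun_last.
Qed.

Lemma merged_Swords_cyclic (H : word -> V) :
  \sum_(0 <= i < N.+1) \sum_(j <- iota 1 (f i).-1) \sum_(0 <= p < N.+1)
      H (mkseq (merge_fun (Sfun i j) p) N.+1)
  + \sum_(0 <= i < N.+1) H (Cword i)
  = \sum_(0 <= m < N.+1) \sum_(0 <= r < N) \sum_(j <- iota 1 (dfun m r).-1)
      H (Sdword m r j).
Proof.
under eq_bigr => i _ do under eq_bigr => j _ do rewrite big_ltn // big_nat_recr //.
under [RHS]eq_bigr => m _ do rewrite big_ltn //.
rewrite [RHS]big_split -merged_Swords_boundary -merged_Swords_inner /=.
under eq_bigr => i _ do rewrite !big_split /=.
rewrite !big_split /=.
set P0 := \sum_(0 <= i < N.+1) _; set PM := \sum_(0 <= i < N.+1) _.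
set PN := \sum_(0 <= i < N.+1) _; set C := \sum_(0 <= i < N.+1) _.
by rewrite -!addrA; congr (_ + _); rewrite addrCA; congr (_ + _); apply: addrC.
Qed.

End CyclicWords.

Lemma iota0_index_iota (n : nat) : iota 0 n = index_iota 0 n.
Proof. by rewrite /index_iota subn0. Qed.

(* The two left-hand sides, for an arbitrary word: all coefficients of C(w)
   and Sigma(w) are 1, so only the derivative of S^t contributes. *)
Lemma pairing_ddt_St_Cw w G :
  pairing (ddt (St (Cw w))) G = \sum_(i <- iota 0 (size w)) dSpair (Cterm i w) G.
Proof.
rewrite /St pairing_ddt_linext /Cw big_map; apply: eq_bigr => i _ /=.
by rewrite derivC mul0r add0r mul1r.
Qed.

Lemma pairing_ddt_St_Sigmaw w G :
  pairing (ddt (St (Sigmaw w))) G =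
  \sum_(i <- iota 0 (size w)) \sum_(j <- iota 1 (head 0%N (rot i w)).-1)
     dSpair (Sterm i j w) G.
Proof.
rewrite /St pairing_ddt_linext /Sigmaw big_flatten big_map.
apply: eq_bigr => i _ /=; rewrite big_map; apply: eq_bigr => j _ /=.
by rewrite derivC mul0r add0r mul1r.
Qed.

(* A single letter z_k: C(z_k) = z_{k+1} is a letter, on which S^t is
   constant, and each of the k - 1 terms of Sigma(z_k) differentiates to
   z_{k+1}. *)
Lemma ddt_St_one_letter k :
  eqv (ddt (St (Cw [:: k]))) [::] /\
  eqv (ddt (St (Sigmaw [:: k]))) [:: ((k.-1)%:R%:P, [:: k.+1])].
Proof.
split; apply: eqv_of_pairing => G.
  rewrite pairing_ddt_St_Cw big_seq1 dSpair_merges /merges /=.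
  by rewrite big_nil pairing_nil.
rewrite pairing_ddt_St_Sigmaw big_seq1 /=.
transitivity (\sum_(j <- iota 1 k.-1) G [:: k.+1]).
  apply: eq_big_seq => j; rewrite mem_iota => /andP[hj1 hj2].
  rewrite dSpair_merges /merges /= big_seq1 /merge_at /= Spair_cons !Spair_nil /=.
  by rewrite mulr0 addr0; congr G; congr (_ :: _); lia.
have -> : iota 1 k.-1 = index_iota 1 k by rewrite /index_iota subn1.
by rewrite sumr_const_nat /pairing big_seq1 /= polyC_natr mulr_natl subn1.
Qed.

Section CyclicWord.
Variables (w : word) (N : nat).
Hypothesis size_w : size w = N.+1.
Hypothesis N_gt0 : (0 < N)%N.
Hypothesis w_pos : all (fun k => 0 < k)%N w.

Let letter x := nth 0%N w (x %% N.+1).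

Lemma letter_periodic x : letter (x %% N.+1) = letter x.
Proof. by rewrite /letter modn_mod. Qed.

Lemma letter_gt0 x : (0 < letter x)%N.
Proof. by move/(all_nthP 0%N): w_pos; apply; rewrite size_w ltn_pmod. Qed.

Lemma Cterm_letters i : (i < N.+1)%N -> Cterm i w = Cword letter N i.
Proof. by move=> hi; rewrite Cterm_mkseq size_w. Qed.

Lemma Sterm_letters i j : (i < N.+1)%N -> Sterm i j w = Sword letter N i j.
Proof. by move=> hi; rewrite Sterm_mkseq size_w. Qed.

Lemma dterm_letters m : (m < N.+1)%N -> dterm m w = mkseq (dfun letter m) N.
Proof. by move=> hm; rewrite dterm_mkseq ?size_w. Qed.

Lemma size_dterm m : (m < N.+1)%N -> size (dterm m w) = N.
Proof. by move=> hm; rewrite dterm_letters // size_mkseq. Qed.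

Lemma head_rot_dterm m r : (m < N.+1)%N -> (r < N)%N ->
  head 0%N (rot r (dterm m w)) = dfun letter m r.
Proof.
move=> hm hr; rewrite head_rot_mod size_dterm // modn_small //.
by rewrite dterm_letters // nth_mkseq.
Qed.

Lemma Cterm_dterm m r : (m < N.+1)%N -> (r < N)%N ->
  Cterm r (dterm m w) = Cdword letter N m r.
Proof.
move=> hm hr; rewrite dterm_letters // Cterm_mkseq size_mkseq //.
by apply: eq_in_mkseq => t ht; rewrite nth_mkseq // ltn_pmod.
Qed.

Lemma Sterm_dterm m r j : (m < N.+1)%N -> (r < N)%N ->
  Sterm r j (dterm m w) = Sdword letter N m r j.
Proof.
move=> hm hr; rewrite dterm_letters // Sterm_mkseq size_mkseq // modn_small //.
by apply: eq_in_mkseq => t ht; rewrite !nth_mkseq ?ltn_pmod.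
Qed.

Lemma ddt_St_Cw_cyclic : eqv (ddt (St (Cw w))) (St (C (deltaw w))).
Proof.
apply: eqv_of_pairing => G.
rewrite pairing_ddt_St_Cw pairing_St /C pairing_linext /deltaw big_map.
rewrite size_w !iota0_index_iota.
transitivity (\sum_(0 <= m < N.+1) \sum_(0 <= r < N) Spair (Cdword letter N m r) G);
  last first.
  apply: eq_big_nat => m /andP[_ hm] /=.
  rewrite mul1r -/(dterm m w) /pairing /Cw big_map size_dterm // iota0_index_iota.
  apply: eq_big_nat => r /andP[_ hr] /=.
  by rewrite mul1r -/(Cterm r _) Cterm_dterm.
rewrite -(@merged_Cwords_cyclic letter N N_gt0 letter_periodic _ (Spair^~ G)).
apply: eq_big_nat => i /andP[_ hi].
by rewrite dSpair_merges Cterm_letters // merges_mkseq // big_map iota0_index_iota.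
Qed.

Lemma ddt_St_Sigmaw_cyclic :
  eqv (ddt (St (Sigmaw w))) (St (Sigma (deltaw w)) ++ scale (-1) (St (Cw w))).
Proof.
apply: eqv_of_pairing => G.
rewrite pairing_cat pairing_scale !pairing_St mulN1r.
rewrite /Sigma pairing_linext /deltaw big_map pairing_ddt_St_Sigmaw.
rewrite size_w !iota0_index_iota.
transitivity (\sum_(0 <= m < N.+1) \sum_(0 <= r < N)
     \sum_(j <- iota 1 (dfun letter m r).-1) Spair (Sdword letter N m r j) G
   - \sum_(0 <= i < N.+1) Spair (Cword letter N i) G); last first.
  congr (_ - _).
    apply: eq_big_nat => m /andP[_ hm] /=.
    rewrite mul1r -/(dterm m w) /pairing /Sigmaw big_flatten big_map.
    rewrite size_dterm // iota0_index_iota; apply: eq_big_nat => r /andP[_ hr] /=.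
    rewrite big_map {1}head_rot_dterm //; apply: eq_bigr => j _ /=.
    by rewrite mul1r -/(Sterm r j _) Sterm_dterm.
  rewrite /pairing /Cw big_map size_w iota0_index_iota.
  by apply: eq_big_nat => i /andP[_ hi] /=; rewrite mul1r -/(Cterm i w) Cterm_letters.
rewrite -(@merged_Swords_cyclic letter N N_gt0 letter_periodic _ letter_gt0 (Spair^~ G)).
rewrite addrK; apply: eq_big_nat => i /andP[_ hi].
rewrite head_rot_mod size_w //; apply: eq_bigr => j _.
by rewrite dSpair_merges Sterm_letters // merges_mkseq // big_map iota0_index_iota.
Qed.

End CyclicWord.

Theorem lemma5p3 (w : word) :
  (0 < size w)%N -> all (fun k => 0 < k)%N w ->
  (eqv (ddt (St (Cw w)))
       (if size w == 1%N then [::] else St (C (deltaw w))))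
  /\
  (eqv (ddt (St (Sigmaw w)))
       (if size w == 1%N then [:: (((sumn w).-1)%:R%:P, [:: (sumn w).+1])]
        else St (Sigma (deltaw w)) ++ scale (-1) (St (Cw w)))).
Proof.
move=> w_nonempty w_pos.
case: (eqVneq (size w) 1%N) => [size1 | size_ne1].
  case: w w_nonempty w_pos size1 => [|k [|]] //= _ _ _.
  by rewrite addn0; exact: ddt_St_one_letter.
have size_w : size w = (size w).-2.+2 by lia.
have N_gt0 : (0 < (size w).-2.+1)%N by [].
split.
  exact: ddt_St_Cw_cyclic size_w N_gt0.
exact: ddt_St_Sigmaw_cyclic size_w N_gt0 w_pos.
Qed.
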